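(* Let $\mathfrak e_1,\mathfrak e_1',\mathfrak e_2$ be virtual extended $\mathbb Z$-segments with $\mathrm{Supp}(\mathfrak e_1)=\mathrm{Supp}(\mathfrak e_1')$, and with $\mathrm{Supp}(\mathfrak e_1)\subseteq\mathrm{Supp}(\mathfrak e_2)$ or $\mathrm{Supp}(\mathfrak e_1)\supseteq\mathrm{Supp}(\mathfrak e_2)$. Write $R(\mathfrak e_1,\mathfrak e_2)=(\widetilde{\mathfrak e_2},\widetilde{\mathfrak e_1})$ and $R(\mathfrak e_1',\mathfrak e_2)=(\widetilde{\mathfrak e_2}',\widetilde{\mathfrak e_1}')$. Then: (1) if $\mathfrak e_1\ne\mathfrak e_1'$, then $\widetilde{\mathfrak e_1}\ne\widetilde{\mathfrak e_1}'$; (2) if $\mathfrak e_1$ and $\mathfrak e_1'$ are adjacent, then $\widetilde{\mathfrak e_1}$ and $\widetilde{\mathfrak e_1}'$ are adjacent. Consequently $\mathfrak e_1\mapsto\widetilde{\mathfrak e_1}$ is a bijection of the set of virtual extended $\mathbb Z$-segments with support $\mathrm{Supp}(\mathfrak e_1)$ sending virtual intervals to virtual intervals; the analogous statement holds for the map given by $R(\mathfrak e_1,-)$.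
   Context: A $\mathbb Z$-segment is $[A,B]=\{A,\dots,B\}$, $A\ge B$ integers, length $b=A-B+1$. A virtual extended $\mathbb Z$-segment is $([A,B],l,\eta)$, $l\in\mathbb Z$, $l\le b/2$, $\eta\in\{\pm1\}$ with $\eta\sim-\eta$ iff $b=2l$; $\mathrm{Supp}=[A,B]$. Two are adjacent if they have the same support and either admit lifts with $\eta_1=\eta_2$, $|l_1-l_2|=1$, or $b$ is odd, $l_1=l_2=(b-1)/2$, $\eta_1=-\eta_2$. A virtual interval is a finite set of distinct virtual extended segments $\{\mathfrak e_1,\dots,\mathfrak e_r\}$ with $\mathfrak e_i$ adjacent to $\mathfrak e_{i+1}$. Row exchange: for $\mathfrak e_i=([A_i,B_i],l_i,\eta_i)$ ($i=1,2$) with nested supports, $R(\mathfrak e_1,\mathfrak e_2)=(\mathfrak e_2',\mathfrak e_1')$ with $\mathfrak e_i'=([A_i,B_i],l_i',\eta_i')$, where $b_i=A_i-B_i+1$, $\epsilon=(-1)^{A_1-B_1}\eta_1\eta_2$ (any lifts). Case 1, $[A_1,B_1]\subseteq[A_2,B_2]$: $(l_1',\eta_1')=(l_1,(-1)^{A_2-B_2}\eta_1)$ and (a) if $\epsilon=1$, $b_2-2l_2<2(b_1-2l_1)$: $(l_2',\eta_2')=(b_2-(l_2+(b_1-2l_1)),(-1)^{A_1-B_1}\eta_2)$; (b) if $\epsilon=1$, $b_2-2l_2\ge2(b_1-2l_1)$: $(l_2',\eta_2')=(l_2+(b_1-2l_1),(-1)^{A_1-B_1+1}\eta_2)$; (c)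 if $\epsilon=-1$: $(l_2',\eta_2')=(l_2-(b_1-2l_1),(-1)^{A_1-B_1+1}\eta_2)$. Case 2, $[A_1,B_1]\supsetneq[A_2,B_2]$: $(l_2',\eta_2')=(l_2,(-1)^{A_1-B_1}\eta_2)$ and (a) if $\epsilon=1$, $b_1-2l_1<2(b_2-2l_2)$: $(l_1',\eta_1')=(b_1-(l_1+(b_2-2l_2)),(-1)^{A_2-B_2}\eta_1)$; (b) if $\epsilon=1$, $b_1-2l_1\ge2(b_2-2l_2)$: $(l_1',\eta_1')=(l_1+(b_2-2l_2),(-1)^{A_2-B_2+1}\eta_1)$; (c) if $\epsilon=-1$: $(l_1',\eta_1')=(l_1-(b_2-2l_2),(-1)^{A_2-B_2+1}\eta_1)$. *)

From Stdlib Require Import ZArith List Bool.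
Open Scope Z_scope.

(** A virtual extended Z-segment ([A,B], l, eta), given by a representative
    ("lift"); the actual object is its class modulo [veq]. *)
Record ves := mkVES { vA : Z; vB : Z; vl : Z; veta : Z }.

Definition vlen (e : ves) : Z := vA e - vB e + 1.

Definition supp (e : ves) : Z * Z := (vA e, vB e).

Definition valid (e : ves) : Prop :=
  vB e <= vA e /\ 2 * vl e <= vlen e /\ (veta e = 1 \/ veta e = -1).

Definition veq (e f : ves) : Prop :=
  vA e = vA f /\ vB e = vB f /\ vl e = vl f /\
  (veta e = veta f \/ vlen e = 2 * vl e).

Definition subseg (S S' : Z * Z) : Prop :=
  snd S' <= snd S /\ fst S <= fst S'.

Definition adjacent (e1 e2 : ves) : Prop :=
  supp e1 = supp e2 /\
  ((exists x y, valid x /\ valid y /\ veq e1 x /\ veq e2 y /\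
                veta x = veta y /\ Z.abs (vl x - vl y) = 1)
   \/ (Z.odd (vlen e1) = true /\ 2 * vl e1 = vlen e1 - 1 /\
       2 * vl e2 = vlen e2 - 1 /\ veta e1 = - veta e2)).

Fixpoint chain_adj (s : list ves) : Prop :=
  match s with
  | x :: ((y :: _) as t) => adjacent x y /\ chain_adj t
  | _ => True
  end.

Definition virtual_interval (s : list ves) : Prop :=
  Forall valid s /\ ForallOrdPairs (fun x y => ~ veq x y) s /\ chain_adj s.

Definition sgnpow (k : Z) : Z := if Z.even k then 1 else -1.

(** Row exchange R(e1,e2) = (e2', e1'). Case 1 when [A1,B1] ⊆ [A2,B2],
    otherwise case 2 (only meaningful for nested supports). *)
Definition row_exchange (e1 e2 : ves) : ves * ves :=
  let A1 := vA e1 in let B1 := vB e1 in let l1 := vl e1 in let h1 := veta e1 in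
  let A2 := vA e2 in let B2 := vB e2 in let l2 := vl e2 in let h2 := veta e2 in
  let b1 := vlen e1 in let b2 := vlen e2 in
  let eps := sgnpow (A1 - B1) * h1 * h2 in
  if (B2 <=? B1) && (A1 <=? A2) then
    let e1' := mkVES A1 B1 l1 (sgnpow (A2 - B2) * h1) in
    let e2' :=
      if eps =? 1 then
        if b2 - 2 * l2 <? 2 * (b1 - 2 * l1)
        then mkVES A2 B2 (b2 - (l2 + (b1 - 2 * l1))) (sgnpow (A1 - B1) * h2)
        else mkVES A2 B2 (l2 + (b1 - 2 * l1)) (sgnpow (A1 - B1 + 1) * h2)
      else mkVES A2 B2 (l2 - (b1 - 2 * l1)) (sgnpow (A1 - B1 + 1) * h2) in
    (e2', e1')
  else
    let e2' := mkVES A2 B2 l2 (sgnpow (A1 - B1) * h2) in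
    let e1' :=
      if eps =? 1 then
        if b1 - 2 * l1 <? 2 * (b2 - 2 * l2)
        then mkVES A1 B1 (b1 - (l1 + (b2 - 2 * l2))) (sgnpow (A2 - B2) * h1)
        else mkVES A1 B1 (l1 + (b2 - 2 * l2)) (sgnpow (A2 - B2 + 1) * h1)
      else mkVES A1 B1 (l1 - (b2 - 2 * l2)) (sgnpow (A2 - B2 + 1) * h1) in
    (e2', e1').

Definition bij_on_supp_preserving_intervals (S : Z * Z) (F : ves -> ves) : Prop :=
  (forall e, valid e -> supp e = S -> valid (F e) /\ supp (F e) = S) /\
  (forall e f, valid e -> valid f -> supp e = S -> supp f = S ->
     veq e f -> veq (F e) (F f)) /\
  (forall e f, valid e -> valid f -> supp e = S -> supp f = S ->
     veq (F e) (F f) -> veq e f) /\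
  (forall g, valid g -> supp g = S ->
     exists e, valid e /\ supp e = S /\ veq (F e) g) /\
  (forall s, Forall (fun e => supp e = S) s -> virtual_interval s ->
     virtual_interval (map F s)).

(** The class of a virtual extended segment with fixed support [[A,B]] is
    determined by the single integer [vcoord e = eta (b - 2 l)]: these
    coordinates are exactly the integers of the parity of [b], and two
    segments are adjacent iff their coordinates differ by 2.  In these
    coordinates each component of the row exchange, with the other argument
    fixed, is a map [t |-> c t + 2 k] with [c = 1] or [c = -1] (a sign change
    or a reflection), which is a bijection of the integers of a given parity
    preserving distances; everything follows. *)

From Stdlib Require Import ZArith List Lia Bool.
Open Scope Z_scope.

Definition vcoord (e : ves) : Z := veta e * (vlen e - 2 * vl e).

Definition twist (s : Z) (e : ves) : ves := mkVES (vA e) (vB e) (vl e) (s * veta e).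

Lemma sgnpow_cases k : sgnpow k = 1 \/ sgnpow k = -1.
Proof. unfold sgnpow; destruct (Z.even k); auto. Qed.

Lemma sgnpow_succ k : sgnpow (k + 1) = - sgnpow k.
Proof. unfold sgnpow; rewrite Z.even_add; destruct (Z.even k); reflexivity. Qed.

Lemma subseg_dec S T : {subseg S T} + {~ subseg S T}.
Proof.
  unfold subseg; destruct (Z_le_dec (snd T) (snd S)), (Z_le_dec (fst S) (fst T));
    [left | right..]; tauto.
Qed.

Lemma veq_vcoord e f : veq e f -> vcoord e = vcoord f.
Proof.
  destruct e as [A B l h], f as [A' B' l' h']; unfold veq, vcoord, vlen; cbn [vA vB vl veta].
  intros (-> & -> & -> & [-> | Hdeg]); [reflexivity | rewrite Hdeg; ring].
Qed.

Lemma vcoord_veq e f :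
  valid e -> valid f -> supp e = supp f -> vcoord e = vcoord f -> veq e f.
Proof.
  destruct e as [A B l h], f as [A' B' l' h'].
  unfold valid, veq, vcoord, supp, vlen; cbn [vA vB vl veta].
  intros (? & ? & [-> | ->]) (? & ? & [-> | ->]) [= -> ->]; lia.
Qed.

Lemma veq_iff_vcoord e f :
  valid e -> valid f -> supp e = supp f -> veq e f <-> vcoord e = vcoord f.
Proof. split; [apply veq_vcoord | apply vcoord_veq; assumption]. Qed.

Lemma vcoord_parity e : valid e -> exists k, vcoord e = vlen e - 2 * k.
Proof.
  intros (_ & _ & [Hh | Hh]); unfold vcoord; rewrite Hh;
    [exists (vl e) | exists (vlen e - vl e)]; ring.
Qed.

Lemma vcoord_surj A B k :
  B <= A -> exists e, valid e /\ supp e = (A, B) /\ vcoord e = A - B + 1 - 2 * k.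
Proof.
  intros HAB; destruct (Z_le_dec (2 * k) (A - B + 1)).
  - exists (mkVES A B k 1).
    unfold valid, vcoord, vlen; cbn [vA vB vl veta]; repeat split; auto; lia.
  - exists (mkVES A B (A - B + 1 - k) (-1)).
    unfold valid, vcoord, vlen; cbn [vA vB vl veta]; repeat split; auto; lia.
Qed.

Lemma valid_twist s e : s = 1 \/ s = -1 -> valid e -> valid (twist s e).
Proof.
  unfold valid, twist, vlen; cbn [vA vB vl veta].
  intros Hs (? & ? & ?); repeat split; auto; lia.
Qed.

Lemma vcoord_twist s e : vcoord (twist s e) = s * vcoord e.
Proof. unfold vcoord, twist, vlen; cbn [vA vB vl veta]; ring. Qed.

Lemma veq_refl e : veq e e.
Proof. unfold veq; tauto. Qed.

Lemma veq_twist_degenerate s e : vlen e = 2 * vl e -> veq e (twist s e).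
Proof. unfold veq, twist, vlen; cbn [vA vB vl veta]; intros Hdeg; repeat split; auto. Qed.

Lemma adjacent_vcoord e f :
  valid e -> valid f -> adjacent e f -> Z.abs (vcoord e - vcoord f) = 2.
Proof.
  intros Ve Vf [Hs [(x & y & Vx & Vy & Ex & Ey & Hh & Hl) | (_ & He & Hf & Hh)]].
  - rewrite (veq_vcoord _ _ Ex), (veq_vcoord _ _ Ey).
    destruct Ex as (HA & HB & _), Ey as (HA' & HB' & _).
    unfold supp in Hs; injection Hs as HAs HBs.
    destruct Vx as (_ & _ & [Hx | Hx]); unfold vcoord, vlen;
      rewrite <- Hh, Hx, <- HA, <- HB, <- HA', <- HB', HAs, HBs; lia.
  - destruct Vf as (_ & _ & [Hf' | Hf']); unfold vcoord; rewrite Hh, Hf'; lia.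
Qed.

Lemma vcoord_adjacent e f :
  valid e -> valid f -> supp e = supp f -> Z.abs (vcoord e - vcoord f) = 2 ->
  adjacent e f.
Proof.
  intros Ve Vf Hs Hd; split; [exact Hs |].
  assert (Hb : vlen e = vlen f) by (unfold supp in Hs; injection Hs; unfold vlen; lia).
  pose proof Ve as (_ & He & Hhe); pose proof Vf as (_ & Hf & Hhf).
  destruct (Z.eq_dec (veta e) (veta f)) as [Hh | Hh].
  { left; exists e, f; do 4 (split; [auto using veq_refl |]); split; [exact Hh |].
    unfold vcoord in Hd; rewrite Hh, Hb in Hd.
    destruct Hhf as [Hf1 | Hf1]; rewrite Hf1 in Hd; lia. }
  (* With opposite signs the coordinates differ by (b - 2 l_e) + (b - 2 l_f) = 2:
     either one side has b = 2 l and its sign may be flipped, or both have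
     b - 2 l = 1, the odd case of adjacency. *)
  assert (Hsum : (vlen e - 2 * vl e) + (vlen f - 2 * vl f) = 2)
    by (unfold vcoord in Hd; destruct Hhe as [He' | He'], Hhf as [Hf' | Hf'];
        rewrite He', Hf' in *; lia).
  destruct (Z.eq_dec (vlen e) (2 * vl e)) as [De | De].
  { left; exists (twist (-1) e), f.
    do 4 (split; [auto using valid_twist, veq_twist_degenerate, veq_refl |]).
    cbn [twist vl veta]; lia. }
  destruct (Z.eq_dec (vlen f) (2 * vl f)) as [Df | Df].
  { left; exists e, (twist (-1) f).
    do 4 (split; [auto using valid_twist, veq_twist_degenerate, veq_refl |]).
    cbn [twist vl veta]; lia. }
  right; repeat split; try lia.
  replace (vlen e) with (1 + 2 * vl e) by lia; apply Z.odd_add_mul_2.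
Qed.

Lemma nested_test_spec e1 e2 :
  (vB e2 <=? vB e1) && (vA e1 <=? vA e2) = true <-> subseg (supp e1) (supp e2).
Proof. unfold subseg, supp; cbn [fst snd]; rewrite andb_true_iff, !Z.leb_le; tauto. Qed.

Lemma nested_test_false e1 e2 :
  ~ subseg (supp e1) (supp e2) -> (vB e2 <=? vB e1) && (vA e1 <=? vA e2) = false.
Proof. rewrite <- nested_test_spec; apply not_true_is_false. Qed.

Lemma snd_row_exchange_nested e1 e2 :
  subseg (supp e1) (supp e2) ->
  snd (row_exchange e1 e2) = twist (sgnpow (vA e2 - vB e2)) e1.
Proof.
  intros H; apply nested_test_spec in H.
  unfold row_exchange; cbv zeta; rewrite H; reflexivity.
Qed.

Lemma fst_row_exchange_not_nested e1 e2 :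
  ~ subseg (supp e1) (supp e2) ->
  fst (row_exchange e1 e2) = twist (sgnpow (vA e1 - vB e1)) e2.
Proof.
  intros H; apply nested_test_false in H.
  unfold row_exchange; cbv zeta; rewrite H; reflexivity.
Qed.

(* The thresholds separating the branches (a), (b), (c) of the row exchange
   are exactly what keeps the new [l] within [b/2]. *)
Ltac row_exchange_branches :=
  unfold valid, vcoord, supp, vlen in *; cbn [vA vB vl veta fst snd] in *;
  rewrite ?sgnpow_succ;
  repeat match goal with
  | H : _ /\ _ /\ (_ = 1 \/ _ = -1) |- _ => destruct H as (? & ? & [-> | ->])
  end;
  repeat match goal with
  | |- context [sgnpow ?x] => destruct (sgnpow_cases x) as [-> | ->]
  end;
  repeat match goal with
  | |- context [if ?a =? ?b then _ else _] => destruct (Z.eqb_spec a b)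
  | |- context [if ?a <? ?b then _ else _] => destruct (Z.ltb_spec a b)
  end;
  cbn [vA vB vl veta]; repeat split; lia.

Lemma fst_row_exchange_nested e1 e2 :
  valid e1 -> valid e2 -> subseg (supp e1) (supp e2) ->
  valid (fst (row_exchange e1 e2)) /\ supp (fst (row_exchange e1 e2)) = supp e2 /\
  vcoord (fst (row_exchange e1 e2)) = 2 * vcoord e1 - sgnpow (vA e1 - vB e1) * vcoord e2.
Proof.
  intros V1 V2 H; apply nested_test_spec in H.
  destruct e1 as [A1 B1 l1 h1], e2 as [A2 B2 l2 h2]; cbn [vA vB] in H.
  unfold row_exchange; cbv zeta; cbn [vA vB vl veta]; rewrite H.
  row_exchange_branches.
Qed.

Lemma snd_row_exchange_not_nested e1 e2 :
  valid e1 -> valid e2 -> ~ subseg (supp e1) (supp e2) ->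
  valid (snd (row_exchange e1 e2)) /\ supp (snd (row_exchange e1 e2)) = supp e1 /\
  vcoord (snd (row_exchange e1 e2)) =
    sgnpow (vA e2 - vB e2) * (2 * sgnpow (vA e1 - vB e1) * vcoord e2 - vcoord e1).
Proof.
  intros V1 V2 H; apply nested_test_false in H.
  destruct e1 as [A1 B1 l1 h1], e2 as [A2 B2 l2 h2]; cbn [vA vB] in H.
  unfold row_exchange; cbv zeta; cbn [vA vB vl veta]; rewrite H.
  row_exchange_branches.
Qed.

Definition vcoord_affine_on (S : Z * Z) (F : ves -> ves) : Prop :=
  exists c k, (c = 1 \/ c = -1) /\
    forall e, valid e -> supp e = S ->
      valid (F e) /\ supp (F e) = S /\ vcoord (F e) = c * vcoord e + 2 * k.

Lemma opp_sgnpow_cases k : - sgnpow k = 1 \/ - sgnpow k = -1.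
Proof. destruct (sgnpow_cases k) as [-> | ->]; auto. Qed.

Lemma snd_row_exchange_affine S e2 :
  valid e2 -> vcoord_affine_on S (fun e => snd (row_exchange e e2)).
Proof.
  intros V2; destruct (subseg_dec S (supp e2)) as [Hn | Hn].
  - exists (sgnpow (vA e2 - vB e2)), 0; split; [apply sgnpow_cases |].
    intros e Ve <-; rewrite snd_row_exchange_nested by exact Hn.
    split; [apply valid_twist; auto using sgnpow_cases |].
    split; [reflexivity | rewrite vcoord_twist; ring].
  - exists (- sgnpow (vA e2 - vB e2)),
      (sgnpow (vA e2 - vB e2) * sgnpow (fst S - snd S) * vcoord e2).
    split; [apply opp_sgnpow_cases |].
    intros e Ve <-; destruct (snd_row_exchange_not_nested e e2 Ve V2 Hn) as (Hv & Hs & ->).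
    split; [exact Hv | split; [exact Hs | cbn [supp fst snd]; ring]].
Qed.

Lemma fst_row_exchange_affine S e1 :
  valid e1 -> vcoord_affine_on S (fun e => fst (row_exchange e1 e)).
Proof.
  intros V1; destruct (subseg_dec (supp e1) S) as [Hn | Hn].
  - exists (- sgnpow (vA e1 - vB e1)), (vcoord e1); split; [apply opp_sgnpow_cases |].
    intros e Ve <-; destruct (fst_row_exchange_nested e1 e V1 Ve Hn) as (Hv & Hs & ->).
    split; [exact Hv | split; [exact Hs | ring]].
  - exists (sgnpow (vA e1 - vB e1)), 0; split; [apply sgnpow_cases |].
    intros e Ve <-; rewrite fst_row_exchange_not_nested by exact Hn.
    split; [apply valid_twist; auto using sgnpow_cases |].
    split; [reflexivity | rewrite vcoord_twist; ring].
Qed.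

Lemma ForallOrdPairs_map {A B : Type} (P : A -> Prop) (R : A -> A -> Prop)
    (R' : B -> B -> Prop) (f : A -> B) (s : list A) :
  (forall x y, P x -> P y -> R x y -> R' (f x) (f y)) ->
  Forall P s -> ForallOrdPairs R s -> ForallOrdPairs R' (map f s).
Proof.
  intros HR HP Hs; induction Hs as [| a s Ha Hs IH]; cbn [map]; constructor.
  - apply Forall_cons_iff in HP as [Pa HP].
    apply Forall_map; rewrite Forall_forall in *; auto.
  - apply IH; now apply Forall_cons_iff in HP.
Qed.

Lemma chain_adj_map (P : ves -> Prop) (F : ves -> ves) (s : list ves) :
  (forall x y, P x -> P y -> adjacent x y -> adjacent (F x) (F y)) ->
  Forall P s -> chain_adj s -> chain_adj (map F s).
Proof.
  intros HF; induction s as [| x [| y s] IH]; cbn [map chain_adj]; auto.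
  intros HP [Hxy Hs]; inversion HP as [| ? ? Px HP']; inversion HP' as [| ? ? Py _].
  split; [apply HF | apply IH]; auto.
Qed.

Section AffineCoordinates.

Context {S : Z * Z} {F : ves -> ves} {c k : Z}.
Hypothesis sign_c : c = 1 \/ c = -1.
Hypothesis F_affine : forall e, valid e -> supp e = S ->
  valid (F e) /\ supp (F e) = S /\ vcoord (F e) = c * vcoord e + 2 * k.

Lemma affine_veq_iff e f :
  valid e -> valid f -> supp e = S -> supp f = S -> veq (F e) (F f) <-> veq e f.
Proof.
  intros Ve Vf Se Sf.
  destruct (F_affine e Ve Se) as (VFe & SFe & TFe), (F_affine f Vf Sf) as (VFf & SFf & TFf).
  rewrite (veq_iff_vcoord _ _ VFe VFf), (veq_iff_vcoord _ _ Ve Vf), TFe, TFf by congruence.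
  destruct sign_c as [-> | ->]; lia.
Qed.

Lemma affine_adjacent e f :
  valid e -> valid f -> supp e = S -> supp f = S -> adjacent e f -> adjacent (F e) (F f).
Proof.
  intros Ve Vf Se Sf Hadj; pose proof (adjacent_vcoord _ _ Ve Vf Hadj) as Hd.
  destruct (F_affine e Ve Se) as (VFe & SFe & TFe), (F_affine f Vf Sf) as (VFf & SFf & TFf).
  apply vcoord_adjacent; auto; [congruence |].
  rewrite TFe, TFf; destruct sign_c as [-> | ->]; lia.
Qed.

Lemma affine_surj g : valid g -> supp g = S -> exists e, valid e /\ supp e = S /\ veq (F e) g.
Proof.
  intros Vg Sg; destruct (vcoord_parity g Vg) as [m Hm].
  assert (Hk : exists k', c * (vlen g - 2 * m - 2 * k) = vlen g - 2 * k').
  { destruct sign_c as [-> | ->]; [exists (m + k) | exists (vlen g - m - k)]; ring. }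
  destruct Hk as [k' Hk].
  destruct (vcoord_surj (vA g) (vB g) k' (proj1 Vg)) as (e & Ve & Se & Te).
  assert (SeS : supp e = S) by (rewrite <- Sg; exact Se).
  exists e; split; [exact Ve | split; [exact SeS |]].
  destruct (F_affine e Ve SeS) as (VFe & SFe & TFe).
  apply vcoord_veq; auto; [congruence |].
  rewrite TFe, Te, Hm; unfold vlen in Hk |- *; destruct sign_c as [-> | ->]; lia.
Qed.

Lemma affine_bij : bij_on_supp_preserving_intervals S F.
Proof.
  split; [| split; [| split; [| split]]].
  - intros e Ve Se; destruct (F_affine e Ve Se) as (? & ? & _); auto.
  - intros e f Ve Vf Se Sf; apply affine_veq_iff; auto.
  - intros e f Ve Vf Se Sf; apply affine_veq_iff; auto.
  - exact affine_surj.
  - intros s HS (Hv & Hne & Hch).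
    assert (HP : Forall (fun e => valid e /\ supp e = S) s) by (apply Forall_and; auto).
    split; [| split].
    + apply Forall_map; eapply Forall_impl; [| exact HP].
      intros e [Ve Se]; apply F_affine; auto.
    + refine (ForallOrdPairs_map _ _ _ F s _ HP Hne).
      intros x y [Vx Sx] [Vy Sy] Hxy HFxy; apply Hxy, (affine_veq_iff x y); auto.
    + refine (chain_adj_map _ F s _ HP Hch).
      intros x y [Vx Sx] [Vy Sy]; apply affine_adjacent; auto.
Qed.

End AffineCoordinates.

Theorem lemma4p12 :
  (forall e1 e1' e2 : ves,
     valid e1 -> valid e1' -> valid e2 ->
     supp e1 = supp e1' ->
     (subseg (supp e1) (supp e2) \/ subseg (supp e2) (supp e1)) ->
     (~ veq e1 e1' -> ~ veq (snd (row_exchange e1 e2)) (snd (row_exchange e1' e2))) /\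
     (adjacent e1 e1' -> adjacent (snd (row_exchange e1 e2)) (snd (row_exchange e1' e2))))
  /\
  (forall (S : Z * Z) (e2 : ves),
     snd S <= fst S -> valid e2 ->
     (subseg S (supp e2) \/ subseg (supp e2) S) ->
     bij_on_supp_preserving_intervals S (fun e => snd (row_exchange e e2)))
  /\
  (forall (e1 : ves) (S : Z * Z),
     valid e1 -> snd S <= fst S ->
     (subseg (supp e1) S \/ subseg S (supp e1)) ->
     bij_on_supp_preserving_intervals S (fun e => fst (row_exchange e1 e))).
Proof.
  split; [| split].
  - intros e1 e1' e2 V1 V1' V2 Hs _.
    destruct (snd_row_exchange_affine (supp e1) e2 V2) as (c & k & Hc & HF).
    split.
    + intros Hne Heq; apply Hne, (affine_veq_iff Hc HF); auto.
    + apply (affine_adjacent Hc HF); auto.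
  - intros S e2 _ V2 _.
    destruct (snd_row_exchange_affine S e2 V2) as (c & k & Hc & HF).
    exact (affine_bij Hc HF).
  - intros e1 S V1 _ _.
    destruct (fst_row_exchange_affine S e1 V1) as (c & k & Hc & HF).
    exact (affine_bij Hc HF).
Qed.
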